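(* Let $F$ be a 3SAT(3) formula satisfying the standing assumptions below, with variables $x_1,\dots,x_p$ and clauses $c_1,\dots,c_q$, and let $(G_s,L)$ be the temporal star constructed from $F$ as described below. Then there exists a (partial) exploration $J$ of $(G_s,L)$ of maximum size which explores all the edges $e_i,e_i',e_i''$ for $i=1,2,\dots,p$.
   Context: A temporal star $(G_s,L)$ consists of a star $G_s$ with center $c$ and a map $L$ assigning to each edge a finite set of positive integer labels (times at which the edge is available). A journey is a sequence of time edges $(u,u_1,l_1),(u_1,u_2,l_2),\dots$ (each $l_t$ a label of the edge traversed) with strictly increasing labels $l_1<l_2<\cdots$. A (partial) exploration is a journey starting and ending at $c$; an edge $\{c,v\}$ is explored if the journey enters it from $c$ to $v$ at some label and later exits it from $v$ to $c$ at a strictly larger label; the size of an exploration is the number of edges (equivalently leaves) it explores. 3SAT(3): a CNF formula with variables $x_1,\dots,x_p$ and clauses $c_1,\dots,c_q$, each clause having at most $3$ literals and each variable appearing in at most $3$ clauses. Standing assumptions on $F$: every variable occurs at least once unnegated and at least once negated; if a variable occurs three times it occurs exactly once negated and twice unnegated, and if it occurs twice it occurs once negated and once unnegated. Construction of $(G_s,L)$ from $F$: the star has the following edges. For each $i=1,\dots,p$: an edge $e_i$ with labels $50i-10,\ 50i-7,\ 50i+10,\ 50i+13$; an edge $e_i'$ with labels $50i,\ 50i+1$; an edge $e_i''$ with labels $50i+15,\ 50i+16$. For each clause $c_j$, $j=1,\dots,q$, an edge $e_{p+j}$ whose labels are: for every variable $x_i$ appearing unnegated in $c_j$ such that $c_j$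 is the first clause (in the order $c_1,\dots,c_q$) containing $x_i$ unnegated, the labels $50i-12,\ 50i-9$; for every variable $x_i$ appearing unnegated in $c_j$ such that an earlier clause already contains $x_i$ unnegated, the labels $50i-8,\ 50i-5$; for every variable $x_i$ appearing negated in $c_j$, the labels $50i+8,\ 50i+11$. *)

From mathcomp Require Import all_boot.
Set Implicit Arguments. Unset Strict Implicit. Unset Printing Implicit Defensive.

(* A temporal star is given by a finite type V of leaves (one leaf v per *)
(* edge {c,v}) and a labelling L : V -> seq nat (the finite set of times *)
(* at which edge {c,v} is available).  Vertices of the star are          *)
(* option V, with None = the center c.                                   *)

Section TemporalStar.
Variable V : finType.
Variable L : V -> seq nat.

Definition tedge := (option V * option V * nat)%type.
Definition tsrc (t : tedge) : option V := t.1.1.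
Definition ttgt (t : tedge) : option V := t.1.2.
Definition tlab (t : tedge) : nat := t.2.

Definition tedge_ok (t : tedge) : bool :=
  match t with
  | (Some v, None, l) => l \in L v
  | (None, Some v, l) => l \in L v
  | _ => false
  end.

Definition t0 : tedge := (None, None, 0).

Definition journey (s : seq tedge) : Prop :=
  all tedge_ok s /\
  forall k, k.+1 < size s ->
    ttgt (nth t0 s k) = tsrc (nth t0 s k.+1) /\
    tlab (nth t0 s k) < tlab (nth t0 s k.+1).

Definition exploration (s : seq tedge) : Prop :=
  journey s /\
  (s <> [::] -> tsrc (head t0 s) = None /\ ttgt (last t0 s) = None).

Definition explored (s : seq tedge) (v : V) : bool :=
  [exists i : 'I_(size s), exists j : 'I_(size s),
     [&& i < j,
         tsrc (nth t0 s i) == None, ttgt (nth t0 s i) == Some v,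
         tsrc (nth t0 s j) == Some v, ttgt (nth t0 s j) == None &
         tlab (nth t0 s i) < tlab (nth t0 s j)]].

Definition expl_size (s : seq tedge) : nat := #|[set v | explored s v]|.

Definition max_exploration (s : seq tedge) : Prop :=
  exploration s /\ forall s', exploration s' -> expl_size s' <= expl_size s.

End TemporalStar.

(* 3SAT(3) formulas.  Variables are x_1..x_p (numbered by nat 1..p).  A  *)
(* literal is a pair (i, b): b = true means x_i unnegated, b = false     *)
(* means negated.  A clause is a duplicate-free list of literals; the     *)
(* formula is the list of clauses c_1..c_q (q = size F, list position     *)
(* j (0-based) is clause c_(j+1)).                                        *)

Definition literal := (nat * bool)%type.
Definition clause := seq literal.
Definition formula := seq clause.

Definition npos (F : formula) (i : nat) := count (fun c => (i, true) \in c) F.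
Definition nneg (F : formula) (i : nat) := count (fun c => (i, false) \in c) F.

Definition wf_3sat3 (p : nat) (F : formula) : Prop :=
  (forall c, c \in F -> [/\ size c <= 3, uniq c &
                            all (fun l : literal => 1 <= l.1 <= p) c]) /\
  (forall i, 1 <= i <= p ->
     let a := npos F i in let b := nneg F i in
     [/\ a + b <= 3, 1 <= a, 1 <= b,
         (a + b = 3 -> b = 1 /\ a = 2) &
         (a + b = 2 -> b = 1 /\ a = 1)]).

(* The construction.  Leaves: e_i, e_i', e_i'' (i = k+1, k : 'I_p) and   *)
(* e_(p+j) for clause c_j (j = k+1, k : 'I_q).                           *)

Definition leafT (p q : nat) : finType := ((('I_p + 'I_p) + 'I_p) + 'I_q)%type.

Definition e_ {p q} (k : 'I_p) : leafT p q := inl (inl (inl k)).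
Definition e'_ {p q} (k : 'I_p) : leafT p q := inl (inl (inr k)).
Definition e''_ {p q} (k : 'I_p) : leafT p q := inl (inr k).
Definition ec_ {p q} (k : 'I_q) : leafT p q := inr k.

Definition first_pos (F : formula) (i : nat) : nat :=
  find (fun c : clause => (i, true) \in c) F.

Definition lit_labels (F : formula) (j : nat) (l : literal) : seq nat :=
  let i := l.1 in
  if l.2 then
    (if first_pos F i == j then [:: 50 * i - 12; 50 * i - 9]
     else [:: 50 * i - 8; 50 * i - 5])
  else [:: 50 * i + 8; 50 * i + 11].

Definition clause_labels (F : formula) (j : nat) : seq nat :=
  flatten [seq lit_labels F j l | l <- nth [::] F j].

Definition star_labels (p : nat) (F : formula) (v : leafT p (size F)) : seq nat :=
  match v with
  | inl (inl (inl k)) => let i := k.+1 in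
      [:: 50 * i - 10; 50 * i - 7; 50 * i + 10; 50 * i + 13]
  | inl (inl (inr k)) => let i := k.+1 in [:: 50 * i; 50 * i + 1]
  | inl (inr k) => let i := k.+1 in [:: 50 * i + 15; 50 * i + 16]
  | inr k => clause_labels F k
  end.

(* Every assignment [s] yields an exploration which, variable after variable, runs through
   the gadget of [x_i] together with the clauses made true by the literal [x_i = s i]; it
   explores all of [e_i], [e_i'], [e_i''] and every clause satisfied by [s], hence has size at
   least [3p + nsat s].
   Conversely, let [J] be any exploration. Each clause edge explored by [J] is first entered
   at a label contributed by a literal of some variable [x_i], i.e. within the time window
   from [50i-12] to [50i+37] of [x_i]. If [e_i], [e_i'] and [e_i''] are all explored, a clause of
   that window containing [~ x_i] but not [x_i] must be visited during [(50i+8, 50i+11)],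
   which forces the visit of [e_i] to be [(50i-10, 50i-7)] and leaves no room for a clause
   containing [x_i] but not [~ x_i]. Since [~ x_i] occurs once, [x_i] can thus be given a
   value such that the clauses of its window left unsatisfied by that value are at most the
   gadget edges of [x_i] missed by [J]. Summing up, [J] has size at most [3p + nsat s_J] for
   the assignment [s_J] so induced, and an assignment maximizing [nsat] yields a maximum
   exploration. *)

From mathcomp Require Import all_boot zify.
Set Implicit Arguments. Unset Strict Implicit. Unset Printing Implicit Defensive.

Section StarExplorations.
Variables (V : finType) (L : V -> seq nat).
Local Notation t0 := (@t0 V).

Definition tedge_step (t u : tedge V) : bool := (ttgt t == tsrc u) && (tlab t < tlab u).

Lemma sorted_journey (s : seq (tedge V)) :
  all (tedge_ok L) s -> sorted tedge_step s -> journey L s.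
Proof.
move=> s_ok s_sorted; split=> // k; case: s s_ok s_sorted => [|t s] //= _ /(pathP t0) step.
by move=> /step /andP[/eqP -> ->].
Qed.

(* A trip [(v, a, b)] goes from the center to [v] at time [a] and back at time [b]. *)
Definition trip := (V * nat * nat)%type.

Definition trip_edges (t : trip) : seq (tedge V) :=
  [:: (None, Some t.1.1, t.1.2); (Some t.1.1, None, t.2)].

Definition tour (ts : seq trip) : seq (tedge V) := flatten (map trip_edges ts).

Definition trip_ok (t : trip) : bool :=
  [&& t.1.2 \in L t.1.1, t.2 \in L t.1.1 & t.1.2 < t.2].

Definition trip_before (t u : trip) : bool := t.2 < u.1.2.

Lemma path_tour t ts : all trip_ok ts -> path trip_before t ts ->
  path tedge_step (Some t.1.1, None, t.2) (tour ts).
Proof.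
elim: ts t => [|u ts IH] t //= /andP[/and3P[_ _ u_lt] ts_ok] /andP[tu ts_path].
rewrite /trip_before in tu.
by rewrite /tedge_step /= eqxx tu u_lt; apply: IH.
Qed.

Lemma tour_exploration ts :
  all trip_ok ts -> sorted trip_before ts -> exploration L (tour ts).
Proof.
move=> ts_ok ts_sorted; split.
  apply: sorted_journey.
    elim: ts ts_ok {ts_sorted} => [|t ts IH] //= /andP[/and3P[ta tb _] /IH].
    by rewrite /= ta tb.
  case: ts ts_ok ts_sorted => [|t ts] //= /andP[/and3P[_ _ t_lt] ts_ok] ts_path.
  by rewrite /tedge_step /= eqxx t_lt path_tour.
case: ts {ts_ok ts_sorted} => [|t ts] //= _; split=> //.
by elim: ts t => [|u ts IH] t //=.
Qed.

Lemma explored_tour ts t : t \in ts -> t.1.2 < t.2 -> explored (tour ts) t.1.1.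
Proof.
case/splitPr=> [ts1 ts2] t_lt.
have -> : tour (ts1 ++ t :: ts2) = tour ts1 ++ trip_edges t ++ tour ts2.
  by rewrite /tour map_cat flatten_cat.
set s := _ ++ _; set n := size (tour ts1).
have n_lt : n < size s by rewrite size_cat /= addnS ltnS leq_addr.
have n1_lt : n.+1 < size s by rewrite size_cat /= !addnS !ltnS leq_addr.
apply/existsP; exists (Ordinal n_lt); apply/existsP; exists (Ordinal n1_lt).
rewrite /= /s !nth_cat ltnn subnn (ltnNge n.+1 n) leqnSn subSnn /=.
by rewrite !eqxx ltnSn t_lt.
Qed.

Variable J : seq (tedge V).
Hypothesis J_expl : exploration L J.

Lemma exploration_lab_lt m n : m < n -> n < size J ->
  tlab (nth t0 J m) < tlab (nth t0 J n).
Proof.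
case: J_expl => [[_ step] _]; elim: n => [|n IH] // m_lt n_lt.
have [_ lt_n] := step n n_lt.
move: m_lt; rewrite ltnS leq_eqVlt => /orP[/eqP -> //|m_lt].
exact: ltn_trans (IH m_lt (ltnW n_lt)) lt_n.
Qed.

Definition visits (v : V) (a b : nat) : Prop :=
  exists2 k, k.+1 < size J &
    nth t0 J k = (None, Some v, a) /\ nth t0 J k.+1 = (Some v, None, b).

(* A journey cannot end at a leaf, and from a leaf it can only return to the center. *)
Lemma entry_visits k v : k < size J -> ttgt (nth t0 J k) = Some v ->
  exists b, visits v (tlab (nth t0 J k)) b.
Proof.
case: J_expl => [[J_ok step] J_ends] k_lt tgt_k.
have ok_nth n : n < size J -> tedge_ok L (nth t0 J n).
  by move=> ?; apply: (allP J_ok); rewrite mem_nth.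
have k1_lt : k.+1 < size J.
  rewrite ltn_neqAle k_lt andbT; apply/negP => /eqP size_J.
  have J_nil : J <> [::] by move=> J0; rewrite J0 in k_lt.
  by case: (J_ends J_nil) => _; rewrite -nth_last -size_J /= tgt_k.
have [link _] := step k k1_lt.
move: tgt_k link (ok_nth k k_lt) (ok_nth k.+1 k1_lt).
case ek: (nth t0 J k) => [[[u|] [w|]] a] //=.
case ek1: (nth t0 J k.+1) => [[[u'|] [w'|]] b] //= [<-] [eu] _ _; subst u'.
by exists b; exists k; rewrite ?ek ?ek1.
Qed.

Lemma visits_labels v a b : visits v a b -> [/\ a \in L v, b \in L v & a < b].
Proof.
case=> k k1_lt [ek ek1]; case: J_expl => [[/allP J_ok _] _].
have := exploration_lab_lt (ltnSn k) k1_lt; rewrite ek ek1 => lt_ab.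
have := J_ok _ (mem_nth t0 (ltnW k1_lt)); have := J_ok _ (mem_nth t0 k1_lt).
by rewrite ek ek1.
Qed.

Lemma visits_disjoint v a b v' a' b' :
  visits v a b -> visits v' a' b' -> v != v' -> b < a' \/ b' < a.
Proof.
have exit_before m n u c u' c' : m < n -> n < size J ->
    nth t0 J m.+1 = (Some u, None, c) -> nth t0 J n = (None, Some u', c') -> c < c'.
  move=> lt_mn n_lt em en; have neq : m.+1 != n by apply: contraPneq em => ->; rewrite en.
  have := exploration_lab_lt (m := m.+1) (n := n); rewrite em en; apply=> //.
  by rewrite ltn_neqAle neq.
move=> [k k1_lt [ek ek1]] [k' k1_lt' [ek' ek1']] neq_v.
case: (ltngtP k k') => [lt|lt|eq_kk'].
- by left; apply: exit_before ek1 ek' => //; exact: ltnW.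
- by right; apply: exit_before ek1' ek => //; exact: ltnW.
- by move: ek'; rewrite -eq_kk' ek => -[eq_v]; rewrite eq_v eqxx in neq_v.
Qed.

Definition first_entry (v : V) : nat :=
  tlab (nth t0 J (find (fun t => ttgt t == Some v) J)).

Lemma explored_first_visit v : explored J v -> exists b, visits v (first_entry v) b.
Proof.
case/existsP=> i /existsP[j /and5P[_ _ /eqP tgt_i _ _]].
have has_entry : has (fun t => ttgt t == Some v) J.
  by apply/hasP; exists (nth t0 J i); rewrite ?mem_nth ?tgt_i.
apply: entry_visits; first by rewrite -has_find.
exact/eqP/(nth_find t0 has_entry).
Qed.

End StarExplorations.

Arguments trip_before {V}.

Section Reduction.
Variables (p : nat) (F : formula).
Hypothesis F_wf : wf_3sat3 p F.
Local Notation q := (size F).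
Local Notation V := (leafT p q).
Local Notation L := (star_labels (p:=p) (F:=F)).

Lemma occurrences_bounds (k : 'I_p) : 1 <= npos F k.+1 <= 2 /\ nneg F k.+1 = 1.
Proof.
case: F_wf => _ /(_ k.+1); rewrite ltn_ord => /(_ isT) [].
set a := npos F k.+1; set b := nneg F k.+1 => le3 a_gt0 b_gt0 sum3 sum2.
have [/eqP/sum3[-> ->]|ne3] // := boolP (a + b == 3).
have [/eqP/sum2[-> ->]|ne2] // := boolP (a + b == 2).
lia.
Qed.

Lemma sum_clauses_count (P : pred clause) : \sum_(j < q) P (nth [::] F j) = count P F.
Proof.
rewrite -sum1_count (big_nth [::]) big_mkcond big_mkord [RHS]big_mkcond /=.
by apply: eq_bigr => j _; case: (P _).
Qed.

Lemma lit_labels_pos j i l : l \in lit_labels F j (i, true) ->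
  l \in [:: 50 * i - 12; 50 * i - 9; 50 * i - 8; 50 * i - 5].
Proof. by rewrite /lit_labels /=; case: ifP => _; rewrite !inE => /orP[] ->; rewrite ?orbT. Qed.

Lemma lit_labels_near j i b l :
  l \in lit_labels F j (i, b) -> 50 * i - 12 <= l <= 50 * i + 11.
Proof. by rewrite /lit_labels /=; case: b; [case: ifP => _|]; rewrite !inE; lia. Qed.

Lemma clause_label_cases j i b l : 0 < i -> (i, b) \notin nth [::] F j ->
  l \in clause_labels F j -> 50 * i - 12 <= l ->
  l \in lit_labels F j (i, ~~ b) \/ 50 * i + 38 <= l.
Proof.
move=> i_gt0 ib_notin /flatten_mapP[[i' b'] ib'_in l_in] l_ge.
have l_near_i' := lit_labels_near l_in.
case: (ltngtP i' i) => [lt_i'i|lt_ii'|eq_i].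
- by move: l_near_i' l_ge lt_i'i i_gt0; clear; lia.
- by right; move: l_near_i' lt_ii'; clear; lia.
left; subst i'.
suff -> : b = ~~ b' by rewrite negbK.
by case: b b' ib_notin ib'_in {l_in l_near_i'} => [] [] // /negPf ->.
Qed.

Lemma expl_size_split (s : seq (tedge V)) : expl_size s =
  \sum_(k < p) explored s (e_ k) + \sum_(k < p) explored s (e'_ k)
  + \sum_(k < p) explored s (e''_ k) + \sum_(j < q) explored s (ec_ j).
Proof.
rewrite /expl_size -sum1_card big_mkcond /= !big_sumType /=.
by congr (_ + _ + _ + _); apply: eq_bigr => v _; rewrite inE.
Qed.

Definition satisfies (s : {ffun 'I_p -> bool}) (j : 'I_q) : bool :=
  [exists k : 'I_p, (k.+1, s k) \in nth [::] F j].

Definition nsat (s : {ffun 'I_p -> bool}) : nat := \sum_(j < q) satisfies s j.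

Section UpperBound.
Variable J : seq (tedge V).
Hypothesis J_expl : exploration L J.

Definition missing (k : 'I_p) : nat :=
  ~~ explored J (e_ k) + ~~ explored J (e'_ k) + ~~ explored J (e''_ k).

Definition window (j : 'I_q) : nat := (first_entry J (ec_ j) + 12) %/ 50.

Definition charged (k : 'I_p) (b : bool) (j : 'I_q) : bool :=
  [&& explored J (ec_ j), window j == k.+1,
      (k.+1, ~~ b) \in nth [::] F j & (k.+1, b) \notin nth [::] F j].

Definition induced_assignment : {ffun 'I_p -> bool} :=
  [ffun k => \sum_(j < q) charged k true j <= missing k].

Lemma clause_visit_in_window (j : 'I_q) i b c :
  0 < i -> (i, b) \notin nth [::] F j ->
  visits J (ec_ j) (first_entry J (ec_ j)) c -> window j = i ->
  first_entry J (ec_ j) \in lit_labels F j (i, ~~ b) /\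
  (c \in lit_labels F j (i, ~~ b) \/ 50 * i + 38 <= c).
Proof.
rewrite /window => i_gt0 ib_notin /(visits_labels J_expl)[/= a_in c_in lt_ac].
set a := first_entry _ _ => win_a.
have a_ge : 50 * i - 12 <= a by move: win_a; clear; lia.
have [//|a_far] := clause_label_cases i_gt0 ib_notin a_in a_ge.
  split=> //; apply: clause_label_cases => //; exact: leq_trans a_ge (ltnW lt_ac).
by move: win_a a_far; clear; lia.
Qed.

Lemma missing_eq0 k :
  (missing k == 0) = [&& explored J (e_ k), explored J (e'_ k) & explored J (e''_ k)].
Proof. by rewrite /missing; do 3!case: (explored _ _). Qed.

Lemma visits_e' k a b : visits J (e'_ k) a b -> a = 50 * k.+1 /\ b = 50 * k.+1 + 1.
Proof. by case/(visits_labels J_expl); rewrite /= !inE; lia. Qed.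

Lemma visits_e'' k a b : visits J (e''_ k) a b -> a = 50 * k.+1 + 15 /\ b = 50 * k.+1 + 16.
Proof. by case/(visits_labels J_expl); rewrite /= !inE; lia. Qed.

(* A clause containing [~ x_i] but not [x_i], entered in the window of [x_i], is visited
   during [(50i+8, 50i+11)]; the only visit of [e_i] avoiding it and [e_i'] is the early one. *)
Lemma charged_true_visit_e k jn : missing k = 0 -> charged k true jn ->
  visits J (e_ k) (50 * k.+1 - 10) (50 * k.+1 - 7).
Proof.
move/eqP; rewrite missing_eq0 => /and3P[ex_e ex_e' ex_e''].
case/and4P=> ex_n /eqP win_n _ n_not_pos.
have [b1 vis1] := explored_first_visit J_expl ex_e.
have [b2 /[dup] vis2 /visits_e'[a2E b2E]] := explored_first_visit J_expl ex_e'.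
have [b3 /[dup] vis3 /visits_e''[a3E b3E]] := explored_first_visit J_expl ex_e''.
have [b4 vis4] := explored_first_visit J_expl ex_n.
have [+ b4_in] := clause_visit_in_window (ltn0Sn k) n_not_pos vis4 win_n.
rewrite /lit_labels /= !inE in b4_in * => a4_in.
have [/= + + lt1] := visits_labels J_expl vis1; rewrite !inE => a1_in b1_in.
have [_ _ lt4] := visits_labels J_expl vis4.
have disj43 := visits_disjoint J_expl vis4 vis3 isT.
have disj14 := visits_disjoint J_expl vis1 vis4 isT.
have disj12 := visits_disjoint J_expl vis1 vis2 isT.
set a1 := first_entry J (e_ k) in vis1 a1_in lt1 disj12 disj14.
set a2 := first_entry J (e'_ k) in a2E disj12.
set a3 := first_entry J (e''_ k) in a3E disj43.
set a4 := first_entry J (ec_ jn) in a4_in lt4 disj43 disj14.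
set i := k.+1 in a1_in b1_in a2E b2E a3E b3E a4_in b4_in *.
clearbody a1 a2 a3 a4 i.
have [a4E b4E] : a4 = 50 * i + 8 /\ b4 = 50 * i + 11.
  by clear -a4_in b4_in lt4 disj43 a3E b3E; lia.
have [a1E b1E] : a1 = 50 * i - 10 /\ b1 = 50 * i - 7.
  by clear -a1_in b1_in lt1 disj12 disj14 a2E b2E a4E b4E; lia.
by rewrite -a1E -b1E.
Qed.

Lemma charged_conflict k jn jp :
  missing k = 0 -> charged k true jn -> charged k false jp -> False.
Proof.
move=> no_missing /(charged_true_visit_e no_missing) vis1.
case/and4P=> ex_p /eqP win_p _ p_not_neg.
have ex_e' : explored J (e'_ k) by move/eqP: no_missing; rewrite missing_eq0 => /and3P[].
have [b2 /[dup] vis2 /visits_e'[a2E b2E]] := explored_first_visit J_expl ex_e'.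
have [b5 vis5] := explored_first_visit J_expl ex_p.
have [/lit_labels_pos + b5_in] := clause_visit_in_window (ltn0Sn k) p_not_neg vis5 win_p.
rewrite !inE => a5_in.
have [_ _ lt5] := visits_labels J_expl vis5.
have disj51 := visits_disjoint J_expl vis5 vis1 isT.
have disj52 := visits_disjoint J_expl vis5 vis2 isT.
move: a5_in b5_in lt5 disj51 disj52; rewrite a2E b2E.
move: (first_entry J (ec_ jp)) (k.+1) => a5 i a5_in + lt5 disj51 disj52.
case=> [/lit_labels_pos|]; rewrite ?inE => b5_in;
  by clear -a5_in b5_in lt5 disj51 disj52; lia.
Qed.

Lemma sum_charged_induced k : \sum_(j < q) charged k (induced_assignment k) j <= missing k.
Proof.
rewrite ffunE; case: (leqP (\sum_(j < q) charged k true j) (missing k)) => // missing_lt.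
have charged_le1 : \sum_(j < q) charged k true j <= 1.
  have [_ <-] := occurrences_bounds k; rewrite /nneg -sum_clauses_count.
  apply: leq_sum => j _; rewrite /charged /=.
  by case: (_ \in _); rewrite ?andbF ?andFb ?leq_b1.
have no_missing : missing k = 0.
  by apply/eqP; rewrite -leqn0 -ltnS; exact: leq_trans missing_lt charged_le1.
have [jn charged_jn] : exists jn, charged k true jn.
  apply/existsP; apply: contraLR missing_lt => /existsPn none.
  by rewrite -leqNgt big1 // => j _; rewrite (negbTE (none j)).
rewrite no_missing leqn0 sum_nat_eq0; apply/forallP => jp; rewrite eqb0.
by apply/negP => /(charged_conflict no_missing charged_jn).
Qed.

Lemma explored_clause_le s j :
  explored J (ec_ j) <= satisfies s j + \sum_(k < p) charged k (s k) j.
Proof.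
have [ex_j|] // := boolP (explored J (ec_ j)).
have [sat_j|unsat_j] := boolP (satisfies s j); first exact: leq_addr.
have [c vis] := explored_first_visit J_expl ex_j.
have [/flatten_mapP[[i b] ib_in a_in] _ _] := visits_labels J_expl vis.
have /andP[i_gt0 i_le] : 0 < i <= p.
  by case: F_wf => /(_ _ (mem_nth [::] (ltn_ord j)))[_ _ /allP/(_ _ ib_in)].
have i1_lt : i.-1 < p by move: i_gt0 i_le; clear; lia.
pose k := Ordinal i1_lt; have k1E : k.+1 = i by rewrite /= prednK.
have win_j : window j = k.+1.
  by rewrite k1E /window; move: (lit_labels_near a_in) i_gt0; clear; lia.
have sk_notin : (k.+1, s k) \notin nth [::] F j.
  by apply: contra unsat_j => sk_in; apply/existsP; exists k.
have bE : b = ~~ s k.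
  by move: sk_notin; rewrite k1E; case: b (s k) ib_in {a_in} => -[] // ->.
rewrite (bigD1 k) //= /charged ex_j win_j eqxx -bE k1E ib_in -k1E sk_notin.
by [].
Qed.

Lemma expl_size_le : expl_size J <= 3 * p + nsat induced_assignment.
Proof.
rewrite expl_size_split.
have clauses_le : \sum_(j < q) explored J (ec_ j) <=
    nsat induced_assignment + \sum_(k < p) missing k.
  apply: leq_trans (leq_sum _ (fun j _ => explored_clause_le induced_assignment j)) _.
  rewrite big_split leq_add2l /= exchange_big; apply: leq_sum => k _.
  exact: sum_charged_induced.
have gadgets : \sum_(k < p) explored J (e_ k) + \sum_(k < p) explored J (e'_ k)
    + \sum_(k < p) explored J (e''_ k) + \sum_(k < p) missing k = 3 * p.
  rewrite -!big_split /= (eq_bigr (fun=> 3)) ?sum_nat_const ?card_ord 1?mulnC // => k _.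
  by rewrite /missing; do 3!case: (explored _ _).
by move: clauses_le gadgets; clear; lia.
Qed.

End UpperBound.

Section CanonicalExploration.

Definition pos_clauses (i : nat) : seq 'I_q :=
  [seq j : 'I_q <- enum 'I_q | (i, true) \in nth [::] F j].
Definition neg_clauses (i : nat) : seq 'I_q :=
  [seq j : 'I_q <- enum 'I_q | (i, false) \in nth [::] F j].

Definition pos_clause_trip (i : nat) (j : 'I_q) : trip V :=
  if first_pos F i == j then (ec_ j, 50 * i - 12, 50 * i - 9)
  else (ec_ j, 50 * i - 8, 50 * i - 5).

Definition gadget_trips (k : 'I_p) (b : bool) : seq (trip V) :=
  let i := k.+1 in
  if b then
    map (pos_clause_trip i) (pos_clauses i) ++
    [:: (e'_ k, 50 * i, 50 * i + 1); (e_ k, 50 * i + 10, 50 * i + 13);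
        (e''_ k, 50 * i + 15, 50 * i + 16)]
  else
    [:: (e_ k, 50 * i - 10, 50 * i - 7); (e'_ k, 50 * i, 50 * i + 1)] ++
    [seq (ec_ j, 50 * i + 8, 50 * i + 11) | j <- neg_clauses i] ++
    [:: (e''_ k, 50 * i + 15, 50 * i + 16)].

Definition canonical_trips (s : {ffun 'I_p -> bool}) : seq (trip V) :=
  flatten [seq gadget_trips k (s k) | k <- enum 'I_p].

Lemma size_filter_clauses (P : pred clause) :
  size [seq j : 'I_q <- enum 'I_q | P (nth [::] F j)] = count P F.
Proof.
have enumF : [seq nth [::] F j | j : 'I_q <- enum 'I_q] = F.
  by rewrite -[RHS](mkseq_nth [::]) /mkseq -val_enum_ord -map_comp.
by rewrite size_filter -[in RHS]enumF [RHS]count_map.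
Qed.

Lemma enum_ord_sorted n : sorted (relpre val ltn) (enum 'I_n).
Proof. by rewrite -sorted_map val_enum_ord iota_ltn_sorted. Qed.

Lemma pos_clauses_shape (k : 'I_p) : exists2 j1 : 'I_q, val j1 = first_pos F k.+1 &
  pos_clauses k.+1 = [:: j1] \/
  exists2 j2 : 'I_q, pos_clauses k.+1 = [:: j1; j2] & val j1 < j2.
Proof.
have [/andP[npos_gt0 npos_le2] _] := occurrences_bounds k.
have has_pos : has (fun c => (k.+1, true) \in c) F by rewrite has_count.
have fp_lt : first_pos F k.+1 < q by rewrite /first_pos -has_find.
have fp_in : Ordinal fp_lt \in pos_clauses k.+1.
  by rewrite mem_filter mem_enum andbT; exact: (nth_find [::] has_pos).
have fp_min j : j \in pos_clauses k.+1 -> first_pos F k.+1 <= j.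
  rewrite mem_filter leqNgt => /andP[j_pos _]; apply/negP => /(before_find [::]).
  by rewrite j_pos.
have pos_sorted : sorted (relpre val ltn) (pos_clauses k.+1).
  rewrite /pos_clauses; apply: sorted_filter; last exact: enum_ord_sorted.
  by move=> a b c /=; exact: ltn_trans.
have := size_filter_clauses (fun c => (k.+1, true) \in c); rewrite -/(pos_clauses _).
move: fp_in fp_min pos_sorted; case: (pos_clauses _) => [|j1 [|j2 [|j3 r]]] //=.
- by rewrite inE => /eqP <- _ _ _; exists (Ordinal fp_lt) => //; left.
- rewrite !inE andbT => /orP[] /eqP fpE fp_min lt12 _.
    by exists j1; [rewrite -fpE | right; exists j2].
  have fpE' : first_pos F k.+1 = j2 by rewrite -fpE.
  by move: (fp_min j1 (mem_head _ _)); rewrite fpE' leqNgt lt12.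
- by move=> _ _ _ size3; move: npos_le2; rewrite /npos -size3.
Qed.

Lemma neg_clauses_shape (k : 'I_p) : exists j, neg_clauses k.+1 = [:: j].
Proof.
have [_] := occurrences_bounds k; rewrite /nneg -size_filter_clauses -/(neg_clauses _).
by case: (neg_clauses _) => [|j [|]] // _; exists j.
Qed.

Lemma mem_clause_labels j lit l :
  lit \in nth [::] F j -> l \in lit_labels F j lit -> l \in clause_labels F j.
Proof. by move=> lit_in l_in; apply/flatten_mapP; exists lit. Qed.

Lemma gadget_trips_ok k b : all (trip_ok L) (gadget_trips k b).
Proof.
case: b; rewrite /gadget_trips /= all_cat.
  apply/andP; split; last by rewrite /trip_ok /= !inE !eqxx /= ?orbT; lia.
  apply/allP => t /mapP[j + ->]; rewrite mem_filter => /andP[pos_j _].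
  rewrite /pos_clause_trip /trip_ok; case: ifP => fp_j /=;
    rewrite !(mem_clause_labels pos_j) /lit_labels /= ?fp_j ?inE ?eqxx ?orbT //=; lia.
apply/and4P; split; try by rewrite /trip_ok /= !inE !eqxx /= ?orbT; lia.
apply/allP => t /mapP[j + ->]; rewrite mem_filter => /andP[neg_j _].
by rewrite /trip_ok /= !(mem_clause_labels neg_j) /lit_labels /= ?inE ?eqxx ?orbT //=; lia.
Qed.

Lemma gadget_trips_pairwise k b : pairwise trip_before (gadget_trips k b).
Proof.
case: b; rewrite /gadget_trips /=; last first.
  by have [j ->] := neg_clauses_shape k; rewrite /= /trip_before /=; lia.
have [j1 fpE [->|[j2 -> lt12]]] := pos_clauses_shape k.
  by rewrite /= /trip_before /pos_clause_trip fpE eqxx /=; lia.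
have fp_j2 : (first_pos F k.+1 == j2) = false by rewrite -fpE ltn_eqF.
by rewrite /= /trip_before /pos_clause_trip fpE eqxx fp_j2 /=; lia.
Qed.

Lemma gadget_trips_window (k : 'I_p) b :
  all (fun t => (50 * k.+1 - 12 <= t.1.2) && (t.2 <= 50 * k.+1 + 16)) (gadget_trips k b).
Proof.
case: b; rewrite /gadget_trips /= !all_cat.
  apply/andP; split; last by rewrite /=; lia.
  by apply/allP => t /mapP[j _ ->]; rewrite /pos_clause_trip; case: ifP => _ /=; lia.
apply/and4P; split; try by rewrite /=; lia.
by apply/allP => t /mapP[j _ ->] /=; lia.
Qed.

Lemma canonical_trips_pairwise (s : {ffun 'I_p -> bool}) :
  pairwise trip_before (canonical_trips s).
Proof.
have := enum_ord_sorted p.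
rewrite sorted_pairwise; last by move=> ? ? ? /=; exact: ltn_trans.
rewrite /canonical_trips; elim: (enum 'I_p) => [|k ks IH] //= /andP[k_before /IH ks_pw].
rewrite pairwise_cat ks_pw gadget_trips_pairwise !andbT.
apply/allrelP => t u t_in /flatten_mapP[k' k'_in u_in].
have /andP[_ t_le] := allP (gadget_trips_window k (s k)) t t_in.
have /andP[u_ge _] := allP (gadget_trips_window k' (s k')) u u_in.
have /= lt_kk' := allP k_before k' k'_in.
by rewrite /trip_before; move: t_le u_ge lt_kk'; clear; lia.
Qed.

Lemma canonical_exploration (s : {ffun 'I_p -> bool}) :
  exploration L (tour (canonical_trips s)).
Proof.
apply: tour_exploration; last exact/pairwise_sorted/canonical_trips_pairwise.
by apply/allP => t /flatten_mapP[k _ t_in]; exact: (allP (gadget_trips_ok k (s k))).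
Qed.

Lemma explored_canonical (s : {ffun 'I_p -> bool}) k v :
  v \in [seq t.1.1 | t <- gadget_trips k (s k)] -> explored (tour (canonical_trips s)) v.
Proof.
case/mapP=> t t_in ->; apply: explored_tour.
  by apply/flatten_mapP; exists k; rewrite ?mem_enum.
by have /and3P[] := allP (gadget_trips_ok k (s k)) t t_in.
Qed.

Lemma canonical_explores_gadgets (s : {ffun 'I_p -> bool}) k :
  [&& explored (tour (canonical_trips s)) (e_ k),
      explored (tour (canonical_trips s)) (e'_ k)
    & explored (tour (canonical_trips s)) (e''_ k)].
Proof.
by apply/and3P; split; apply: (explored_canonical (k := k));
  rewrite /gadget_trips; case: (s k); rewrite /= !map_cat !(mem_cat, inE) eqxx ?orbT.
Qed.

Lemma canonical_explores_satisfied (s : {ffun 'I_p -> bool}) j :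
  satisfies s j -> explored (tour (canonical_trips s)) (ec_ j).
Proof.
case/existsP=> k lit_in; apply: (explored_canonical (k := k)).
have in_clauses b : (k.+1, b) \in nth [::] F j ->
    j \in [seq j : 'I_q <- enum 'I_q | (k.+1, b) \in nth [::] F j].
  by rewrite mem_filter mem_enum andbT.
rewrite /gadget_trips; move: lit_in; case: (s k) => /in_clauses j_in /=.
  apply/mapP; exists (pos_clause_trip k.+1 j); last by rewrite /pos_clause_trip; case: ifP.
  by rewrite mem_cat map_f.
apply/mapP; exists (ec_ j, 50 * k.+1 + 8, 50 * k.+1 + 11) => //.
by rewrite !mem_cat map_f ?orbT.
Qed.

Lemma canonical_size (s : {ffun 'I_p -> bool}) :
  3 * p + nsat s <= expl_size (tour (canonical_trips s)).
Proof.
rewrite expl_size_split.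
have ex_gadget := canonical_explores_gadgets s.
have ex_clause := @canonical_explores_satisfied s.
move: (tour _) ex_gadget ex_clause => T ex_gadget ex_clause.
have gadget_sum (v_ : 'I_p -> V) :
    (forall k, explored T (v_ k)) -> \sum_(k < p) explored T (v_ k) = p.
  move=> ex; rewrite (eq_bigr (fun=> 1)) ?sum_nat_const ?card_ord ?muln1 // => k _.
  by rewrite ex.
have ex_e k : explored T (e_ k) by case/and3P: (ex_gadget k).
have ex_e' k : explored T (e'_ k) by case/and3P: (ex_gadget k).
have ex_e'' k : explored T (e''_ k) by case/and3P: (ex_gadget k).
have clauses_ge : nsat s <= \sum_(j < q) explored T (ec_ j).
  apply: leq_sum => j _.
  by case: (boolP (satisfies s j)) => // /ex_clause ->.
move: (gadget_sum _ ex_e) (gadget_sum _ ex_e') (gadget_sum _ ex_e'') clauses_ge.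
by clear; lia.
Qed.

End CanonicalExploration.
End Reduction.

Theorem lemma1 (p : nat) (F : formula) :
  wf_3sat3 p F ->
  exists J : seq (tedge (leafT p (size F))),
    max_exploration (star_labels (p:=p) (F:=F)) J /\
    forall k : 'I_p,
      [&& explored J (e_ k), explored J (e'_ k) & explored J (e''_ k)].
Proof.
move=> F_wf.
pose s_best := [arg max_(s > [ffun=> true] : {ffun 'I_p -> bool}) nsat F s].
have best (s : {ffun 'I_p -> bool}) : nsat F s <= nsat F s_best.
  by rewrite /s_best; case: arg_maxnP => // s' _ /(_ s isT).
exists (tour (canonical_trips F s_best)); split; last exact: canonical_explores_gadgets.
split; first exact: canonical_exploration F_wf s_best.
move=> J J_expl; apply: leq_trans (expl_size_le F_wf J_expl) _.
by apply: leq_trans _ (canonical_size F s_best); rewrite leq_add2l best.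
Qed.
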